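(* Let $q$ be a prime power and $k\ge3$, $h\ge2$ integers, and $1\le u_0<u_1\le\dots\le u_h$ integers. Let $U_0,U_1,\dots,U_h$ be subspaces of $\mathbf F_q^k$ of dimensions $u_0,u_1,\dots,u_h$ with $U_i\cap U_j=U_0$ for all distinct $i,j\in\{1,\dots,h\}$, and assume $q^k-q^{k-1}>q^{u_0}-1+\sum_{i=1}^h(q^{u_i}-q^{u_0})$. Let $U$ be the set of nonzero vectors of $\mathbf F_q^k$ not in $U_1\cup\dots\cup U_h$, let $\widetilde G$ be a matrix whose columns consist of exactly one representative of each class $\{\lambda\mathbf v:\lambda\in\mathbf F_q^*\}$, $\mathbf v\in U$, and let $\mathbf C$ be the linear code with generator matrix $\widetilde G$. 1) If $u_1=\dots=u_{s_1}<u_{s_1+1}=\dots=u_{s_1+s_2}<\dots<u_{s_1+\dots+s_{t-1}+1}=\dots=u_{s_1+\dots+s_t}$ with $1\le s_i<q$ for $i=1,\dots,t$ and $h=s_1+\dots+s_t$, then the Griesmer defect of $\mathbf C$ is at most $(h-1)\frac{q^{u_0}-1}{q-1}$. 2) If $u_1=\dots=u_h=u$, then the Griesmer defect of $\mathbf C$ is at most $(h-1)\frac{q^{u_0}-1}{q-1}+\sum_{i=1}^{k-u}\lfloor h/q^i\rfloor$.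
   Context: For a linear $[n,k,d]_q$ code, $g_q(k,d)=\sum_{i=0}^{k-1}\lceil d/q^i\rceil$ and the Griesmer defect is $n-g_q(k,d)$. *)

From HB Require Import structures.
From mathcomp Require Import all_boot all_order all_algebra all_field.
Set Implicit Arguments. Unset Strict Implicit. Unset Printing Implicit Defensive.
Import GRing.Theory.

Local Open Scope ring_scope.

Definition wt (F : fieldType) (n : nat) (c : 'rV[F]_n) : nat :=
  #|[set j : 'I_n | c 0 j != 0]|.

Definition min_dist (F : finFieldType) (k n : nat) (G : 'M[F]_(k, n)) : nat :=
  \big[minn/n]_(x : 'rV[F]_k | x *m G != 0) wt (x *m G).

Definition ceil_div (a b : nat) : nat := ((a + b - 1) %/ b)%N.

Definition griesmer (q k d : nat) : nat := (\sum_(i < k) ceil_div d (q ^ i))%N.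

Definition griesmer_defect (F : finFieldType) (k n : nat) (G : 'M[F]_(k, n)) : nat :=
  (n - griesmer #|F| (\rank G) (min_dist G))%N.

(* The columns of G are the points of PG(k-1, q) off U_1 u ... u U_h; since the
   U_i pairwise meet in U_0, counting vectors gives
   n + sum_i [u_i]_q = [k]_q + (h - 1) [u_0]_q, where [u]_q = (q^u - 1)/(q - 1).
   For x <> 0 the codeword xG vanishes exactly at the columns lying in the
   hyperplane x^perp, which has q^(k-1) vectors and meets each U_i in at least
   q^(u_i - 1) of them; counting the vectors off x^perp gives
   wt(xG) >= q^(k-1) - S with S = sum_j q^(u_j - 1), hence d >= q^(k-1) - S.
   The size hypothesis makes U_1 u ... u U_h too small to contain 0 and the
   complement of a hyperplane, so xG <> 0 and the code has dimension k.
   In the Griesmer sum, ceil(d/q^i) >= q^(k-1-i) - floor(S/q^i), and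
   floor(S/q^i) splits into the terms q^(u_j-1-i) of the U_j with u_j > i, which
   add up to at most sum_j [u_j]_q, plus the floor of the contribution of the U_j
   with u_j <= i.  That remainder vanishes when no dimension occurs q times, and
   is sum_i floor(h/q^i) when all u_j are equal. *)

From HB Require Import structures.
From mathcomp Require Import all_boot all_order all_algebra all_field.
From mathcomp Require Import zify.
Set Implicit Arguments. Unset Strict Implicit. Unset Printing Implicit Defensive.
Import GRing.Theory.

Definition qint (q u : nat) : nat := \sum_(i < u) q ^ i.

Definition low_floor_sum (q k h : nat) (us : 'I_h -> nat) : nat :=
  \sum_(i < k) (\sum_(j | us j <= i) q ^ (us j).-1) %/ q ^ i.

Lemma leq_ceil_div d m : 0 < m -> d <= ceil_div d m * m.
Proof.
move=> m_gt0; rewrite /ceil_div; case: d => [|d]; first exact: leq0n.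
by rewrite addSn subn1 -[X in d + X]mul1n divnDMl // addn1 ltn_ceil.
Qed.

Section GriesmerArithmetic.

Variable q : nat.
Hypothesis q_gt1 : 1 < q.

Let q_gt0 : 0 < q. Proof. exact: ltnW. Qed.

Lemma qintE u : qint q u = (q ^ u - 1) %/ (q - 1).
Proof. by rewrite !subn1 predn_exp mulKn //; lia. Qed.

Lemma expn_qint u : q ^ u = (q - 1) * qint q u + 1.
Proof. by rewrite subn1 /qint -predn_exp addn1 prednK // expn_gt0 q_gt0. Qed.

Lemma qint_le_griesmer k d S :
  q ^ k.-1 <= d + S -> qint q k <= griesmer q k d + \sum_(i < k) S %/ q ^ i.
Proof.
move=> le_qk; rewrite /qint (reindex_inj rev_ord_inj) /griesmer -big_split /=.
apply: leq_sum => i _.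
have qi_gt0 : 0 < q ^ i by rewrite expn_gt0 q_gt0.
have qkE : q ^ k.-1 = q ^ (k - i.+1) * q ^ i.
  by rewrite -expnD; congr (_ ^ _); have := ltn_ord i; lia.
rewrite -(mulnK (q ^ (k - i.+1)) qi_gt0) -qkE.
apply: leq_trans (leq_div2r _ le_qk) _.
rewrite -divnMDl //; apply: leq_div2r; rewrite leq_add2r.
exact: leq_ceil_div.
Qed.

Lemma sum_truncated_pow_le_qint k u :
  \sum_(i < k) (if i < u then q ^ (u.-1 - i) else 0) <= qint q u.
Proof.
rewrite /qint [leqRHS](reindex_inj rev_ord_inj) /=.
rewrite (big_ord_widen _ (fun i => if i < u then q ^ (u.-1 - i) else 0) (leq_addr u k)).
rewrite (big_ord_widen _ (fun i => q ^ (u - i.+1)) (leq_addl k u)).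
rewrite big_mkcond [leqRHS]big_mkcond /=.
apply: leq_sum => i _; case: (i < k); case: ifP => //= lt_iu.
by rewrite subnS predn_sub.
Qed.

Lemma sum_floor_le_qint k h (us : 'I_h -> nat) :
  \sum_(i < k) (\sum_j q ^ (us j).-1) %/ q ^ i
    <= \sum_j qint q (us j) + low_floor_sum q k us.
Proof.
have split_high i : (\sum_j q ^ (us j).-1) %/ q ^ i =
    \sum_j (if i < us j then q ^ ((us j).-1 - i) else 0)
    + (\sum_(j | us j <= i) q ^ (us j).-1) %/ q ^ i.
  rewrite (bigID (fun j => us j <= i)) /= addnC big_mkcond /=.
  rewrite -divnMDl ?expn_gt0 ?q_gt0 // big_distrl /=.
  congr ((_ + _) %/ _); apply: eq_bigr => j _; rewrite ltnNge.
  by case: leqP => //= lt_ij; rewrite -expnD subnK //; lia.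
rewrite /low_floor_sum (eq_bigr _ (fun (i : 'I_k) _ => split_high i)) big_split /=.
rewrite leq_add2r exchange_big /=; apply: leq_sum => j _.
exact: sum_truncated_pow_le_qint.
Qed.

Lemma griesmer_gap_le k h n d u0 (us : 'I_h -> nat) :
  n + \sum_j qint q (us j) = qint q k + (h - 1) * qint q u0 ->
  q ^ k.-1 - \sum_j q ^ (us j).-1 <= d ->
  n - griesmer q k d <= (h - 1) * qint q u0 + low_floor_sum q k us.
Proof.
move=> count; rewrite leq_subLR addnC => /qint_le_griesmer le_qint.
have := sum_floor_le_qint k us.
move: ((h - 1) * qint q u0) (\sum_(i < k) _) => t s in count le_qint *; lia.
Qed.

Lemma sum_low_pow_lt h (us : 'I_h -> nat) :
  (forall j, 0 < us j) -> (forall j, #|[set j' | us j' == us j]| < q) ->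
  forall m, \sum_(j | us j <= m) q ^ (us j).-1 < q ^ m.
Proof.
move=> us_gt0 mult_lt; elim=> [|m IHm].
  by rewrite big1 // => j; have := us_gt0 j; lia.
have mult_le : #|[set j | us j == m.+1]| <= q.-1.
  case: (pickP (fun j => us j == m.+1)) => [j0 /eqP <- | none].
    by rewrite -ltnS prednK // mult_lt.
  by rewrite eq_card0 // => j; rewrite inE none.
have top : \sum_(j | (us j <= m.+1) && ~~ (us j <= m)) q ^ (us j).-1
    = #|[set j | us j == m.+1]| * q ^ m.
  rewrite -sum_nat_cond_const; apply: eq_big => [j | j /andP[le_jm1 gt_jm]].
    by rewrite -ltnNge -eqn_leq.
  by have -> : us j = m.+1 by lia.
rewrite (bigID (fun j => us j <= m)) /= top.
rewrite (eq_bigl (fun j => us j <= m)); last by move=> j; rewrite andb_idl // => /leqW.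
by rewrite expnS -[X in _ < X * _](prednK q_gt0) mulSn -addSn leq_add // leq_mul.
Qed.

Lemma low_floor_sum_eq0 k h (us : 'I_h -> nat) :
  (forall j, 0 < us j) -> (forall j, #|[set j' | us j' == us j]| < q) ->
  low_floor_sum q k us = 0.
Proof.
move=> us_gt0 mult_lt; rewrite /low_floor_sum big1 // => i _.
exact/divn_small/sum_low_pow_lt.
Qed.

Lemma low_floor_sum_const k h (us : 'I_h -> nat) u :
  0 < u -> (forall j, us j = u) ->
  low_floor_sum q k us = \sum_(1 <= i < (k - u).+1) h %/ q ^ i.
Proof.
move=> u_gt0 us_u.
have term i : (\sum_(j | us j <= i) q ^ (us j).-1) %/ q ^ i
    = if u <= i then h %/ q ^ (i - u).+1 else 0.
  under eq_bigl => j do rewrite us_u.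
  under eq_bigr => j _ do rewrite us_u.
  case: leqP => [le_ui | _]; last by rewrite big_pred0_eq div0n.
  rewrite sum_nat_const card_ord.
  have -> : q ^ i = q ^ (i - u).+1 * q ^ u.-1 by rewrite -expnD; congr (_ ^ _); lia.
  by rewrite divnMr // expn_gt0 q_gt0.
rewrite /low_floor_sum (eq_bigr _ (fun (i : 'I_k) _ => term i)).
rewrite -(big_mkord xpredT (fun i => if u <= i then h %/ q ^ (i - u).+1 else 0)).
case: (leqP u k) => [le_uk | lt_ku]; last first.
  rewrite [RHS]big_geq; last by lia.
  rewrite big_nat_cond big1 // => i /andP[/andP[_ lt_ik] _].
  by rewrite leqNgt (ltn_trans lt_ik lt_ku).
rewrite (big_cat_nat (leq0n u) le_uk) /= [X in X + _]big_nat_cond big1 ?add0n.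
  rewrite -{1}[u]add0n big_addn big_add1 /=.
  by apply: eq_bigr => i _; rewrite leq_addl addnK.
by move=> i /andP[/andP[_ lt_iu] _]; rewrite leqNgt lt_iu.
Qed.

Lemma qint_point_count k h n u0 (us : 'I_h -> nat) U :
  0 < h -> (q - 1) * n + U = q ^ k -> U + (h - 1) * q ^ u0 = \sum_j q ^ us j ->
  n + \sum_j qint q (us j) = qint q k + (h - 1) * qint q u0.
Proof.
move=> h_gt0 count_pts count_union.
have sum_pow : \sum_j q ^ us j = (q - 1) * \sum_j qint q (us j) + h.
  rewrite big_distrr -[h in _ + h]card_ord -sum1_card -big_split /=.
  by apply: eq_bigr => j _; rewrite expn_qint.
have pow_k := expn_qint k; have pow_u0 := expn_qint u0.
apply/eqP; rewrite -(eqn_pmul2l (_ : 0 < q - 1)) ?subn_gt0 // !mulnDr; apply/eqP.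
nia.
Qed.

End GriesmerArithmetic.

Lemma sunflower_card_eq h c U (a : 'I_h -> nat) :
  0 < h -> (forall i, c <= a i) -> U + (h - 1) * c = \sum_(i < h) a i ->
  U = c + \sum_(i < h) (a i - c).
Proof.
move=> h_gt0 le_ca sumE.
have split_sum : \sum_(i < h) (a i - c) + h * c = \sum_(i < h) a i.
  have -> : h * c = \sum_(i < h) c by rewrite sum_nat_const card_ord.
  by rewrite -big_split; apply: eq_bigr => i _; rewrite /= subnK.
have := leq_pmull c h_gt0; rewrite mulnBl mul1n in sumE; lia.
Qed.

Local Open Scope ring_scope.

Lemma card_sum_mem (T : finType) (A : {set T}) : #|A| = (\sum_v (v \in A))%N.
Proof. by rewrite -sum1_card big_mkcond; apply: eq_bigr => v _; case: (v \in A). Qed.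

Lemma card_bigcup_le (I T : finType) (A : I -> {set T}) :
  (#|\bigcup_i A i| <= \sum_i #|A i|)%N.
Proof.
apply: (big_ind2 (fun (S : {set T}) m => #|S| <= m)%N) => [|S1 m1 S2 m2 le1 le2|//].
  by rewrite cards0.
by rewrite (leq_trans (leq_card_setU S1 S2)) ?leq_add.
Qed.

Lemma card_bigcup_sunflower (T : finType) h (A : 'I_h -> {set T}) (B : {set T}) :
  (1 < h)%N -> (forall i j, i != j -> A i :&: A j = B) ->
  (#|\bigcup_i A i| + (h - 1) * #|B| = \sum_i #|A i|)%N.
Proof.
move=> h_gt1 capAB.
have B_sub i : B \subset A i.
  have [j ij] : exists j : 'I_h, i != j.
    have [-> | ne] := eqVneq i (Ordinal (ltnW h_gt1)); last by exists (Ordinal (ltnW h_gt1)).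
    by exists (Ordinal h_gt1); rewrite -val_eqE.
  by rewrite -(capAB i j ij) subsetIl.
have count v : ((v \in \bigcup_i A i) + (h - 1) * (v \in B) = \sum_i (v \in A i))%N.
  case: (boolP (v \in B)) => [vB | vNB].
    have vA i : v \in A i by apply: (subsetP (B_sub i)).
    rewrite (eq_bigr (fun=> 1%N)) => [|i _]; last by rewrite vA.
    have -> : v \in \bigcup_i A i by apply/bigcupP; exists (Ordinal (ltnW h_gt1)).
    by rewrite sum1_card card_ord muln1; lia.
  rewrite muln0 addn0; case: (boolP (v \in \bigcup_i A i)) => [/bigcupP[i _ vAi] | vNU].
    rewrite (bigD1 i) //= vAi big1 // => j ji; suff /negbTE -> : v \notin A j by [].
    apply: contra vNB => vAj.
    by rewrite -(capAB i j); [rewrite inE vAi | rewrite eq_sym].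
  rewrite big1 // => i _; suff /negbTE -> : v \notin A i by [].
  by apply: contra vNU => vAi; apply/bigcupP; exists i.
rewrite (eq_bigr _ (fun i _ => card_sum_mem (A i))) exchange_big /=.
by rewrite !card_sum_mem big_distrr -big_split; apply: eq_bigr => v _; rewrite /= count.
Qed.

Section Hyperplanes.

Variables (F : finFieldType) (k : nat).
Local Notation q := #|F|.

Definition dual_form (x : 'rV[F]_k) : 'Hom('rV[F]_k, 'rV[F]_1) := linfun (mulmxr x^T).

Definition hyperplane (x : 'rV[F]_k) : {vspace 'rV[F]_k} := lker (dual_form x).

Lemma dual_formE x v : dual_form x v = v *m x^T.
Proof. exact: lfunE. Qed.

Lemma mem_hyperplane x v : (v \in hyperplane x) = (v *m x^T == 0).
Proof. by rewrite memv_ker dual_formE. Qed.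

Lemma card_vset (W : {vspace 'rV[F]_k}) : #|[set v in W]| = (q ^ \dim W)%N.
Proof. by rewrite cardsE card_vspace. Qed.

Lemma dim_img_dual_form_le1 x (W : {vspace 'rV[F]_k}) : (\dim (dual_form x @: W) <= 1)%N.
Proof. by rewrite (leq_trans (dimvS (subvf _))) // dimvf /dim /= mul1n. Qed.

Lemma dim_cap_hyperplane x (W : {vspace 'rV[F]_k}) :
  ((\dim W).-1 <= \dim (W :&: hyperplane x))%N.
Proof.
rewrite -(limg_ker_dim (dual_form x) W) -subn1 leq_subLR addnC.
by rewrite leq_add ?dim_img_dual_form_le1.
Qed.

Lemma dim_hyperplane x : x != 0 -> \dim (hyperplane x) = k.-1.
Proof.
move=> x_nz; have img_gt0 : (0 < \dim (limg (dual_form x)))%N.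
  rewrite lt0n dimv_eq0; apply: contraNneq x_nz => img0.
  rewrite -[x]trmxK; apply/eqP; rewrite -trmx0; congr (_^T); apply/row_matrixP => j.
  have : dual_form x (delta_mx 0 j) \in (0 : {vspace 'rV[F]_1})%VS.
    by rewrite -img0 memv_img ?memvf.
  by rewrite memv0 dual_formE -rowE row0 => /eqP.
have img1 : \dim (limg (dual_form x)) = 1%N.
  by apply/eqP; rewrite eqn_leq img_gt0 dim_img_dual_form_le1.
have := limg_ker_dim (dual_form x) fullv.
by rewrite capfv dimvf /dim /= mul1n img1 addn1 => /(congr1 predn) <-.
Qed.

Lemma card_hyperplane x : x != 0 -> (#|[set v in hyperplane x]| <= q ^ k.-1)%N.
Proof. by move=> x_nz; rewrite card_vset dim_hyperplane. Qed.

Lemma card_vset_diff_hyperplane x (W : {vspace 'rV[F]_k}) :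
  (#|[set v in W] :\: [set v in hyperplane x]| <= q ^ \dim W - q ^ (\dim W).-1)%N.
Proof.
rewrite cardsD card_vset leq_sub2l //.
have -> : [set v in W] :&: [set v in hyperplane x] = [set v in (W :&: hyperplane x)%VS].
  by apply/setP => v; rewrite !inE memv_cap.
by rewrite card_vset leq_exp2l ?dim_cap_hyperplane ?finNzRing_gt1.
Qed.

End Hyperplanes.

Section ColumnMultiples.

Variables (F : finFieldType) (k n : nat) (G : 'M[F]_(k, n)).
Local Notation q := #|F|.

Definition col_multiples (J : {set 'I_n}) : {set 'rV[F]_k} :=
  [set p.2 *: (col p.1 G)^T | p in setX J [set~ 0]].

Lemma card_col_multiples_le J : (#|col_multiples J| <= (q - 1) * #|J|)%N.
Proof. by rewrite (leq_trans (leq_imset_card _ _)) // cardsX cardsC1 mulnC subn1. Qed.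

Lemma card_col_multiples J :
  (forall j, (col j G)^T != 0) ->
  (forall j j', j != j' -> forall lam, (col j G)^T != lam *: (col j' G)^T) ->
  #|col_multiples J| = ((q - 1) * #|J|)%N.
Proof.
move=> cols_nz cols_distinct.
rewrite card_in_imset; first by rewrite cardsX cardsC1 mulnC subn1.
move=> [j lam] [j' lam']; rewrite !inE /= => /andP[_ lam_nz] /andP[_ lam'_nz] eq_mult.
have eq_jj' : j = j'.
  case: (eqVneq j j') => // /cols_distinct/(_ (lam^-1 * lam'))/negP[].
  by rewrite -scalerA -eq_mult scalerA mulVf ?scale1r.
case: j' / eq_jj' eq_mult => /eqP; rewrite -subr_eq0 -scalerBl scaler_eq0.
by rewrite (negbTE (cols_nz j)) orbF subr_eq0 => /eqP ->.
Qed.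

Lemma tr_col_mulmx x j : (col j G)^T *m x^T = ((x *m G) 0 j)%:M.
Proof.
by rewrite -trmx_mul [LHS]mx11_scalar !mxE; congr _%:M; apply: eq_bigr => l _; rewrite !mxE.
Qed.

Lemma scaled_col_in_hyperplane x j lam : lam != 0 ->
  (lam *: (col j G)^T \in hyperplane x) = ((x *m G) 0 j == 0).
Proof.
move=> lam_nz; rewrite mem_hyperplane -scalemxAl tr_col_mulmx -scalemx1 scalerA.
by rewrite scaler_eq0 (negbTE (matrix_nonzero1 F 0)) orbF mulf_eq0 (negbTE lam_nz).
Qed.

End ColumnMultiples.

Lemma min_dist_ge (F : finFieldType) k n (G : 'M[F]_(k, n)) B :
  (exists x : 'rV_k, x *m G != 0) ->
  (forall x : 'rV_k, x *m G != 0 -> (B <= wt (x *m G))%N) ->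
  (B <= min_dist G)%N.
Proof.
move=> [x0 x0G] wt_ge; apply: (big_ind (fun m => B <= m)%N) => //.
- by rewrite (leq_trans (wt_ge x0 x0G)) // /wt (leq_trans (max_card _)) ?card_ord.
- by move=> m1 m2 le1 le2; rewrite leq_min le1.
Qed.

Section ComplementCode.

Variables (F : finFieldType) (k n h : nat) (G : 'M[F]_(k, n)).
Variable Us : 'I_h -> {vspace 'rV[F]_k}.
Local Notation q := #|F|.

Definition vspace_union : {set 'rV[F]_k} := \bigcup_i [set v in Us i].

Hypothesis h_gt0 : (0 < h)%N.
Hypothesis cols_nz : forall j, (col j G)^T != 0.
Hypothesis cols_out : forall j i, (col j G)^T \notin Us i.
Hypothesis cols_distinct :
  forall j j', j != j' -> forall lam, (col j G)^T != lam *: (col j' G)^T.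
Hypothesis cols_cover : forall v, v != 0 -> (forall i, v \notin Us i) ->
  exists j, exists lam, lam != 0 /\ v = lam *: (col j G)^T.

Lemma col_multiples_setT : col_multiples G setT = ~: vspace_union.
Proof.
apply/setP => v; rewrite inE; apply/idP/idP => [/imsetP[[j lam]] | vNU].
  rewrite !inE /= => lam_nz ->; apply/bigcupP => -[i _].
  by rewrite inE => /(memvZ lam^-1); rewrite scalerK //; apply/negP.
have v_nz : v != 0.
  apply: contraNneq vNU => ->.
  by apply/bigcupP; exists (Ordinal h_gt0); rewrite ?inE ?mem0v.
have [|j [lam [lam_nz ->]]] := cols_cover v_nz.
  by move=> i; apply: contra vNU => vUi; apply/bigcupP; exists i; rewrite ?inE.
by apply/imsetP; exists (j, lam); rewrite ?inE.
Qed.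

Lemma card_complement_points : ((q - 1) * n + #|vspace_union| = q ^ k)%N.
Proof.
have := card_col_multiples setT cols_nz cols_distinct.
by rewrite cardsT card_ord col_multiples_setT => <-; rewrite addnC cardsC card_mx mul1n.
Qed.

Lemma card_outside_hyperplane x :
  (#|~: [set v in hyperplane x] :\: vspace_union| <= (q - 1) * wt (x *m G))%N.
Proof.
apply: leq_trans (card_col_multiples_le _ _); apply: subset_leq_card.
apply/subsetP => v; rewrite inE => /andP[vNU vNH].
have : v \in ~: vspace_union by rewrite inE.
rewrite -col_multiples_setT => /imsetP[[j lam]]; rewrite !inE /= => lam_nz vE.
move: vNH; rewrite vE !inE scaled_col_in_hyperplane // => xGj.
by apply/imsetP; exists (j, lam); rewrite ?inE ?xGj.
Qed.

Lemma wt_complement_code_ge x :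
  x != 0 -> (q ^ k.-1 - \sum_i q ^ (\dim (Us i)).-1 <= wt (x *m G))%N.
Proof.
move=> x_nz; set H := [set v in hyperplane x]; set S := (\sum_i _)%N.
have k_gt0 : (0 < k)%N.
  rewrite lt0n; apply: contraNneq x_nz => k0; apply/eqP/rowP => j.
  by have := ltn_ord j; rewrite {2}k0.
have pow_diff u : (q ^ u - q ^ u.-1 <= (q - 1) * q ^ u.-1)%N.
  by case: u => [|u]; rewrite ?subnn // mulnBl mul1n -expnS.
have in_union : (#|~: H :&: vspace_union| <= (q - 1) * S)%N.
  have sub : ~: H :&: vspace_union \subset \bigcup_i ([set v in Us i] :\: H).
    apply/subsetP => v; rewrite !inE => /andP[vNH /bigcupP[i _ vUi]].
    by apply/bigcupP; exists i; rewrite // !inE vNH; rewrite inE in vUi.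
  apply: leq_trans (subset_leq_card sub) _; apply: leq_trans (card_bigcup_le _) _.
  rewrite big_distrr leq_sum // => i _.
  exact: leq_trans (card_vset_diff_hyperplane _ _) (pow_diff _).
have total : (q ^ k = #|H| + #|~: H :&: vspace_union| + #|~: H :\: vspace_union|)%N.
  by rewrite -addnA cardsID cardsC card_mx mul1n.
have H_le : (#|H| <= q ^ k.-1)%N := card_hyperplane x_nz.
have out_le : (#|~: H :\: vspace_union| <= (q - 1) * wt (x *m G))%N.
  exact: card_outside_hyperplane.
rewrite leq_subLR -(leq_pmul2l (_ : 0 < q - 1)%N) ?subn_gt0 ?finNzRing_gt1 //.
rewrite mulnBl mul1n -expnS prednK // leq_subLR mulnDr; lia.
Qed.

Lemma complement_codeword_neq0 (x : 'rV[F]_k) :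
  (#|vspace_union| <= q ^ k - q ^ k.-1)%N -> x != 0 -> x *m G != 0.
Proof.
move=> small_union x_nz; apply: contraTneq small_union => xG0; rewrite -ltnNge.
set H := [set v in hyperplane x].
have wt0 : wt (x *m G) = 0%N by rewrite xG0 /wt eq_card0 // => j; rewrite !inE mxE eqxx.
have outside0 : ~: H :\: vspace_union = set0.
  by have := card_outside_hyperplane x; rewrite wt0 muln0 leqn0 cards_eq0 => /eqP.
have sub_union : 0 |: ~: H \subset vspace_union.
  apply/subsetP => v; rewrite !inE => /orP[/eqP-> | vNH].
    by apply/bigcupP; exists (Ordinal h_gt0); rewrite ?inE ?mem0v.
  apply: contraT => vNU; have : v \in ~: H :\: vspace_union by rewrite !inE vNU.
  by rewrite outside0 inE.
apply: leq_trans (subset_leq_card sub_union); rewrite cardsU1 !inE mem0v add1n ltnS.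
have H_compl : (#|H| + #|~: H| = q ^ k)%N by rewrite cardsC card_mx mul1n.
by rewrite leq_subLR -H_compl leq_add2r card_hyperplane.
Qed.

Lemma rank_complement_code :
  (#|vspace_union| <= q ^ k - q ^ k.-1)%N -> \rank G = k.
Proof.
move=> small_union; apply/eqP/inj_row_free => x /eqP; apply: contraTeq.
exact: complement_codeword_neq0.
Qed.

Lemma min_dist_complement_code_ge :
  (0 < k)%N -> (#|vspace_union| <= q ^ k - q ^ k.-1)%N ->
  (q ^ k.-1 - \sum_i q ^ (\dim (Us i)).-1 <= min_dist G)%N.
Proof.
move=> k_gt0 small_union; apply: min_dist_ge => [|x xG_nz].
  exists (const_mx 1); apply: complement_codeword_neq0 => //.
  by apply/eqP => /rowP/(_ (Ordinal k_gt0)); rewrite !mxE; apply/eqP/oner_neq0.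
by apply: wt_complement_code_ge; apply: contraNneq xG_nz => ->; rewrite mul0mx.
Qed.

End ComplementCode.

Theorem lemma3p2 (F : finFieldType) (k h : nat)
  (U0 : {vspace 'rV[F]_k}) (Us : 'I_h -> {vspace 'rV[F]_k})
  (n : nat) (G : 'M[F]_(k, n)) :
  (3 <= k)%N -> (2 <= h)%N ->
  (1 <= \dim U0)%N ->
  (forall i : 'I_h, (\dim U0 < \dim (Us i))%N) ->
  (forall i j : 'I_h, (i <= j)%N -> (\dim (Us i) <= \dim (Us j))%N) ->
  (forall i j : 'I_h, i != j -> (Us i :&: Us j)%VS = U0) ->
  (#|F| ^ k - #|F| ^ k.-1 >
     #|F| ^ \dim U0 - 1 + \sum_(i < h) (#|F| ^ \dim (Us i) - #|F| ^ \dim U0))%N ->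
  (* every column of G lies in U = (F^k \ {0}) \ (U_1 u ... u U_h) *)
  (forall j : 'I_n, (col j G)^T != 0 /\ forall i : 'I_h, (col j G)^T \notin Us i) ->
  (* distinct columns represent distinct projective points *)
  (forall j j' : 'I_n, j != j' -> forall lam : F, (col j G)^T != lam *: (col j' G)^T) ->
  (* every point of U is represented by some column *)
  (forall v : 'rV[F]_k, v != 0 -> (forall i : 'I_h, v \notin Us i) ->
     exists j : 'I_n, exists lam : F, lam != 0 /\ v = lam *: (col j G)^T) ->
  ((* part 1: each dimension value occurs fewer than q times *)
   (forall i : 'I_h,
      (#|[set j : 'I_h | \dim (Us j) == \dim (Us i)]| < #|F|)%N) ->
   (griesmer_defect G <= (h - 1) * ((#|F| ^ \dim U0 - 1) %/ (#|F| - 1)))%N)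
  /\
  ((* part 2: all U_i of the same dimension u *)
   forall u : nat, (forall i : 'I_h, \dim (Us i) = u) ->
   (griesmer_defect G <= (h - 1) * ((#|F| ^ \dim U0 - 1) %/ (#|F| - 1))
        + \sum_(1 <= i < (k - u).+1) (h %/ #|F| ^ i))%N).
Proof.
move=> k_ge3 h_ge2 _ U0_lt _ cap_U0 small_dims cols distinct cover.
have q_gt1 := finNzRing_gt1 F; have h_gt0 := ltnW h_ge2.
have cols_nz j : (col j G)^T != 0 := (cols j).1.
have cols_out j i : (col j G)^T \notin Us i := (cols j).2 i.
have sunflower : (#|vspace_union Us| + (h - 1) * #|F| ^ \dim U0
                  = \sum_(i < h) #|F| ^ \dim (Us i))%N.
  rewrite -card_vset (eq_bigr _ (fun i _ => esym (card_vset (Us i)))).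
  apply: card_bigcup_sunflower => // i j /cap_U0 <-.
  by apply/setP => v; rewrite !inE memv_cap.
have small_union : (#|vspace_union Us| <= #|F| ^ k - #|F| ^ k.-1)%N.
  rewrite (sunflower_card_eq h_gt0 _ sunflower) => [|i]; last by rewrite leq_exp2l // ltnW.
  have pow_gt0 : (0 < #|F| ^ \dim U0)%N by rewrite expn_gt0 ltnW.
  lia.
have rankG := rank_complement_code h_gt0 cols_out cover small_union.
have dG := min_dist_complement_code_ge h_gt0 cols_out cover (ltnW (ltnW k_ge3)) small_union.
have points := card_complement_points h_gt0 cols_nz cols_out distinct cover.
have count := qint_point_count q_gt1 (us := fun i => \dim (Us i)) h_gt0 points sunflower.
have gap := griesmer_gap_le q_gt1 count dG.
have dims_gt0 i : (0 < \dim (Us i))%N := leq_ltn_trans (leq0n _) (U0_lt i).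
rewrite /griesmer_defect rankG -(qintE q_gt1); split=> [mult_lt | u dims_u].
  by rewrite (low_floor_sum_eq0 q_gt1 k dims_gt0 mult_lt) addn0 in gap.
have u_gt0 : (0 < u)%N by rewrite -(dims_u (Ordinal h_gt0)).
by rewrite (low_floor_sum_const q_gt1 k u_gt0 dims_u) in gap.
Qed.
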